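(* Let $\Sigma$ be an alphabet. The transition systems labelled on $\Sigma$ are exactly the objects of the slice topos $\mathcal{G}/\Sigma$ which are separated for the double negation topology of $\mathcal{G}/\Sigma$.
   Context: $\mathcal{G}=\mathbf{Sets}^{\Gamma^{op}}$ is the topos of graphs ($\Gamma$ has objects $N,A$ and arrows $s,t:N\to A$; a graph has nodes, arcs and source/target maps, with parallel arcs and self-loops allowed; morphisms preserve source and target). For a set $\Sigma$, also denote by $\Sigma$ the graph with one node and arc set $\Sigma$. The slice topos $\mathcal{G}/\Sigma$ has as objects morphisms $g:G\to\Sigma$ (i.e., graphs whose arcs are labelled by elements of $\Sigma$) and as morphisms label-preserving graph morphisms. A transition system labelled on $\Sigma$ is an object $g:G\to\Sigma$ such that for every pair of nodes $x,y$ and every $\alpha\in\Sigma$ there is at most one arc from $x$ to $y$ labelled $\alpha$. The double negation topology of a topos is $\neg\neg:\Omega\to\Omega$, where $\neg$ is the classifying map of false $\perp:1\to\Omega$. An object $X$ is separated for a topology $j$ if for every object $Y$, every $j$-dense subobject $m:S\hookrightarrow Y$ (one whose closure, classified by $j\circ\chi_m$, is $Y$) and every $f:S\to X$ there is at most one $h:Y\to X$ with $h\circ m=f$. *)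

Set Implicit Arguments.
Unset Strict Implicit.

Record Graph := mkGraph {
  node : Type;
  arc  : Type;
  src  : arc -> node;
  tgt  : arc -> node }.
Arguments src : clear implicits.
Arguments tgt : clear implicits.

Record ghom (G H : Graph) := mkGhom {
  gN : node G -> node H;
  gA : arc G -> arc H;
  gsrc : forall e, src H (gA e) = gN (src G e);
  gtgt : forall e, tgt H (gA e) = gN (tgt G e) }.

Definition ghom_eq (G H : Graph) (f g : ghom G H) : Prop :=
  (forall x, gN f x = gN g x) /\ (forall e, gA f e = gA g e).

Definition ghom_comp (G H K : Graph) (g : ghom H K) (f : ghom G H) : ghom G K :=
  {| gN := fun x => gN g (gN f x);
     gA := fun e => gA g (gA f e);
     gsrc := fun e => eq_trans (gsrc g (gA f e)) (f_equal (gN g) (gsrc f e));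
     gtgt := fun e => eq_trans (gtgt g (gA f e)) (f_equal (gN g) (gtgt f e)) |}.

Definition SigmaGraph (Sigma : Type) : Graph :=
  {| node := unit; arc := Sigma; src := fun _ => tt; tgt := fun _ => tt |}.

Record LGraph (Sigma : Type) := mkLGraph {
  lgr :> Graph;
  lmap : ghom lgr (SigmaGraph Sigma) }.

Definition lab (Sigma : Type) (X : LGraph Sigma) (e : arc X) : Sigma :=
  gA (lmap X) e.
Arguments lab {Sigma} X e.

Record LHom (Sigma : Type) (X Y : LGraph Sigma) := mkLHom {
  lh :> ghom X Y;
  lh_comm : ghom_eq (ghom_comp (lmap Y) lh) (lmap X) }.

Definition lhom_eq (Sigma : Type) (X Y : LGraph Sigma) (f g : LHom X Y) : Prop :=
  ghom_eq f g.

Lemma lhom_comp_comm (Sigma : Type) (X Y Z : LGraph Sigma)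
  (g : LHom Y Z) (f : LHom X Y) :
  ghom_eq (ghom_comp (lmap Z) (ghom_comp g f)) (lmap X).
Proof.
  split.
  - intros x. simpl. destruct (gN (lmap Z) (gN g (gN f x))), (gN (lmap X) x). reflexivity.
  - intros e. simpl.
    exact (eq_trans (proj2 (lh_comm g) (gA f e)) (proj2 (lh_comm f) e)).
Qed.

Definition lhom_comp (Sigma : Type) (X Y Z : LGraph Sigma)
  (g : LHom Y Z) (f : LHom X Y) : LHom X Z :=
  {| lh := ghom_comp g f; lh_comm := lhom_comp_comm g f |}.

Definition mono (Sigma : Type) (S Y : LGraph Sigma) (m : LHom S Y) : Prop :=
  forall (Z : LGraph Sigma) (u v : LHom Z S),
    lhom_eq (lhom_comp m u) (lhom_comp m v) -> lhom_eq u v.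

(** * G/Sigma as a presheaf topos on the category of elements of Sigma.
    Its objects ("stages") are the node N and, for each alpha in Sigma, the
    arc A_alpha; the non-identity arrows are s_alpha, t_alpha : N -> A_alpha. *)
Inductive stage (Sigma : Type) : Type :=
| SN : stage Sigma
| SA : Sigma -> stage Sigma.
Arguments SN {Sigma}.
Arguments SA {Sigma} _.

Inductive arr (Sigma : Type) : stage Sigma -> stage Sigma -> Type :=
| aid : forall c, arr c c
| asrc : forall a, arr SN (SA a)
| atgt : forall a, arr SN (SA a).
Arguments aid {Sigma} c.
Arguments asrc {Sigma} a.
Arguments atgt {Sigma} a.

Definition comp_SN (Sigma : Type) (e : stage Sigma) (h : arr e SN) (a : Sigma)
  : arr e (SA a) :=
  match h in arr e' d' return
        (match d' with SN => arr e' (SA a) | SA _ => unit end) with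
  | aid c0 => match c0 return
                (match c0 with SN => arr c0 (SA a) | SA _ => unit end) with
              | SN => asrc a
              | SA _ => tt
              end
  | asrc _ => tt
  | atgt _ => tt
  end.

Definition comp_SN' (Sigma : Type) (e : stage Sigma) (h : arr e SN) (a : Sigma)
  : arr e (SA a) :=
  match h in arr e' d' return
        (match d' with SN => arr e' (SA a) | SA _ => unit end) with
  | aid c0 => match c0 return
                (match c0 with SN => arr c0 (SA a) | SA _ => unit end) with
              | SN => atgt a
              | SA _ => tt
              end
  | asrc _ => tt
  | atgt _ => tt
  end.

Definition comp (Sigma : Type) (c d e : stage Sigma) (f : arr d c) : arr e d -> arr e c :=
  match f in arr d0 c0 return arr e d0 -> arr e c0 with
  | aid _ => fun g => g
  | asrc a => fun g => comp_SN g a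
  | atgt a => fun g => comp_SN' g a
  end.

Definition elt (Sigma : Type) (X : LGraph Sigma) (c : stage Sigma) : Type :=
  match c with
  | SN => node X
  | SA a => { e : arc X | lab X e = a }
  end.

Definition act (Sigma : Type) (X : LGraph Sigma) (c d : stage Sigma) (f : arr d c)
  : elt X c -> elt X d :=
  match f in arr d0 c0 return elt X c0 -> elt X d0 with
  | aid _ => fun y => y
  | asrc a => fun y => src X (proj1_sig y)
  | atgt a => fun y => tgt X (proj1_sig y)
  end.

Definition mapelt (Sigma : Type) (X Y : LGraph Sigma) (h : LHom X Y) (c : stage Sigma)
  : elt X c -> elt Y c :=
  match c return elt X c -> elt Y c with
  | SN => fun x => gN h x
  | SA a => fun x =>
      exist (fun e => lab Y e = a) (gA h (proj1_sig x))
            (eq_trans (proj2 (lh_comm h) (proj1_sig x)) (proj2_sig x))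
  end.

(** Sieve-valued predicates on a stage c: the points of Omega(c) are sieves on c. *)
Definition spred (Sigma : Type) (c : stage Sigma) : Type :=
  forall d : stage Sigma, arr d c -> Prop.

(** Negation  neg : Omega -> Omega, the classifying map of false : 1 -> Omega:
    neg R = { f : d -> c | f^* R is the empty sieve }. *)
Definition neg (Sigma : Type) (c : stage Sigma) (R : spred c) : spred c :=
  fun d f => forall (e : stage Sigma) (g : arr e d), ~ R e (comp f g).

(** Characteristic map chi_m : Y -> Omega of m : S -> Y, at an element y of Y(c):
    the sieve of arrows f with y.f factoring through m. *)
Definition chi (Sigma : Type) (S Y : LGraph Sigma) (m : LHom S Y)
  (c : stage Sigma) (y : elt Y c) : spred c :=
  fun d f => exists s : elt S d, mapelt m s = act f y.

(** m is dense for the double negation topology: the closure of m, classified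
    by (neg o neg) o chi_m, is all of Y (i.e. contains every element y). *)
Definition negneg_dense (Sigma : Type) (S Y : LGraph Sigma) (m : LHom S Y) : Prop :=
  forall (c : stage Sigma) (y : elt Y c), neg (neg (chi m y)) (aid c).

Definition negneg_separated (Sigma : Type) (X : LGraph Sigma) : Prop :=
  forall (Y S : LGraph Sigma) (m : LHom S Y),
    mono m -> negneg_dense m ->
    forall (f : LHom S X) (h1 h2 : LHom Y X),
      lhom_eq (lhom_comp h1 m) f -> lhom_eq (lhom_comp h2 m) f -> lhom_eq h1 h2.

Definition transition_system (Sigma : Type) (X : LGraph Sigma) : Prop :=
  forall (x y : node X) (alpha : Sigma) (e1 e2 : arc X),
    src X e1 = x -> tgt X e1 = y -> lab X e1 = alpha ->
    src X e2 = x -> tgt X e2 = y -> lab X e2 = alpha ->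
    e1 = e2.

From Stdlib Require Import Classical.

(* Nodes are the elements at the stage N, which receives no arrow but its
   identity, while every arc restricts to a node.  Hence a subobject is
   ¬¬-dense exactly when it contains every node, and X is ¬¬-separated exactly
   when morphisms into X are determined by their action on nodes.  This fails
   precisely when X has two parallel arcs with the same label: they give two
   distinct extensions along the inclusion of the discrete graph on the nodes
   into the graph with one extra arc. *)

Section Slice.
Context {Sigma : Type}.

Definition labelling {G : Graph} (l : arc G -> Sigma) : ghom G (SigmaGraph Sigma) :=
  {| gN := fun _ => tt : node (SigmaGraph Sigma); gA := l;
     gsrc := fun _ => eq_refl; gtgt := fun _ => eq_refl |}.

Lemma label_preserving_comm {X Y : LGraph Sigma} {h : ghom X Y} :
  (forall e, lab Y (gA h e) = lab X e) -> ghom_eq (ghom_comp (lmap Y) h) (lmap X).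
Proof.
  intros Hl. split.
  - intros x. simpl. now destruct (gN (lmap Y) (gN h x)), (gN (lmap X) x).
  - exact Hl.
Qed.

Definition lhom_of_labels {X Y : LGraph Sigma} (h : ghom X Y)
  (Hl : forall e, lab Y (gA h e) = lab X e) : LHom X Y :=
  {| lh := h; lh_comm := label_preserving_comm Hl |}.

Lemma mono_of_injective {S Y : LGraph Sigma} {m : LHom S Y} :
  (forall s1 s2, gN m s1 = gN m s2 -> s1 = s2) ->
  (forall e1 e2, gA m e1 = gA m e2 -> e1 = e2) -> mono m.
Proof.
  intros injN injA Z u v [EN EA]. split.
  - intros z. apply injN, EN.
  - intros e. apply injA, EA.
Qed.

Lemma arr_SN_ind (P : forall e : stage Sigma, arr e SN -> Prop) :
  P SN (aid SN) -> forall e g, P e g.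
Proof.
  intros H e g.
  refine (match g as g0 in arr e0 c0 return
            (match c0 return arr e0 c0 -> Prop with
             | SN => fun g1 => P e0 g1 | SA _ => fun _ => True end) g0 with
          | aid c0 => _ | asrc _ => I | atgt _ => I end).
  destruct c0; [exact H | exact I].
Qed.

Definition arr_from_SN (e : stage Sigma) : arr SN e :=
  match e with SN => aid SN | SA a => asrc a end.

Definition node_surjective {S Y : LGraph Sigma} (m : LHom S Y) : Prop :=
  forall n : node Y, exists s : node S, gN m s = n.

Lemma negneg_dense_iff_node_surjective {S Y : LGraph Sigma} (m : LHom S Y) :
  negneg_dense m <-> node_surjective m.
Proof.
  split.
  - intros Hd n. apply NNPP. intros Hn.
    apply (Hd SN n SN (aid SN)).
    intros e g; revert e g.
    apply (arr_SN_ind (fun e g => ~ @chi Sigma S Y m SN n e (comp (aid SN) g))).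
    intros [s Hs]. apply Hn. now exists s.
  - intros Hsurj c y e g Hneg.
    apply (Hneg SN (arr_from_SN e)).
    apply Hsurj.
Qed.

Lemma transition_system_lhom_eq {Y X : LGraph Sigma} {h1 h2 : LHom Y X} :
  transition_system X -> (forall n, gN h1 n = gN h2 n) -> lhom_eq h1 h2.
Proof.
  intros TS HN. split; [exact HN|].
  intros a.
  apply (TS (gN h1 (src Y a)) (gN h1 (tgt Y a)) (lab Y a)).
  - apply gsrc.
  - apply gtgt.
  - exact (proj2 (lh_comm h1) a).
  - rewrite gsrc. symmetry. apply HN.
  - rewrite gtgt. symmetry. apply HN.
  - exact (proj2 (lh_comm h2) a).
Qed.

Lemma transition_system_negneg_separated (X : LGraph Sigma) :
  transition_system X -> negneg_separated X.
Proof.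
  intros TS Y S m _ Hd f h1 h2 E1 E2.
  apply transition_system_lhom_eq; [exact TS|].
  intros n.
  destruct (proj1 (negneg_dense_iff_node_surjective m) Hd n) as [s <-].
  exact (eq_trans (proj1 E1 s) (eq_sym (proj1 E2 s))).
Qed.

Section ArcExtension.
Context {V : Type} (x y : V) (alpha : Sigma).

Definition discrete_graph : Graph :=
  {| node := V; arc := Empty_set; src := Empty_set_rect _; tgt := Empty_set_rect _ |}.

Definition arc_graph : Graph :=
  {| node := V; arc := unit; src := fun _ => x; tgt := fun _ => y |}.

Definition discrete_lgraph : LGraph Sigma :=
  {| lgr := discrete_graph; lmap := labelling (G := discrete_graph) (Empty_set_rect _) |}.

Definition arc_lgraph : LGraph Sigma :=
  {| lgr := arc_graph; lmap := labelling (G := arc_graph) (fun _ => alpha) |}.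

Definition discrete_lhom {Y : LGraph Sigma} (f : V -> node Y) : LHom discrete_lgraph Y :=
  lhom_of_labels
    (@mkGhom discrete_lgraph Y f (Empty_set_rect _) (Empty_set_rect _) (Empty_set_rect _))
    (Empty_set_rect _).

Definition discrete_incl : LHom discrete_lgraph arc_lgraph :=
  discrete_lhom (Y := arc_lgraph) (fun v => v).

Lemma discrete_incl_mono : mono discrete_incl.
Proof. apply mono_of_injective; [easy | intros []]. Qed.

Lemma discrete_incl_negneg_dense : negneg_dense discrete_incl.
Proof. apply negneg_dense_iff_node_surjective. intros v. now exists v. Qed.

Context {X : LGraph Sigma} (f : V -> node X).

Definition arc_lhom (a : arc X) (Hs : src X a = f x) (Ht : tgt X a = f y)
  (Hl : lab X a = alpha) : LHom arc_lgraph X :=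
  lhom_of_labels (@mkGhom arc_lgraph X f (fun _ => a) (fun _ => Hs) (fun _ => Ht))
    (fun _ => Hl).

Lemma arc_lhom_discrete_incl (a : arc X) Hs Ht Hl :
  lhom_eq (lhom_comp (arc_lhom a Hs Ht Hl) discrete_incl) (discrete_lhom f).
Proof. split; [reflexivity | intros []]. Qed.

End ArcExtension.

Lemma negneg_separated_transition_system (X : LGraph Sigma) :
  negneg_separated X -> transition_system X.
Proof.
  intros Hsep x y alpha e1 e2 Hs1 Ht1 Hl1 Hs2 Ht2 Hl2.
  set (f := fun n : node X => n).
  refine (proj2 (Hsep _ _ _ (discrete_incl_mono x y alpha)
                   (discrete_incl_negneg_dense x y alpha) (discrete_lhom f)
                   (arc_lhom x y alpha f e1 Hs1 Ht1 Hl1)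
                   (arc_lhom x y alpha f e2 Hs2 Ht2 Hl2)
                   (arc_lhom_discrete_incl _ _ _ _ _ _ _ _)
                   (arc_lhom_discrete_incl _ _ _ _ _ _ _ _)) tt).
Qed.

End Slice.

Theorem theorem5 (Sigma : Type) (X : LGraph Sigma) :
  transition_system X <-> negneg_separated X.
Proof.
  split.
  - apply transition_system_negneg_separated.
  - apply negneg_separated_transition_system.
Qed.
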